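(* Let $X\sim\mathsf{Bernoulli}(p)$ with $p\in[\frac12,1)$ and let $P_{Y|X}=\mathsf{BIBO}(\alpha,\beta)$ (i.e. $P_{Y|X}(\cdot|0)=(\bar\alpha,\alpha)$, $P_{Y|X}(\cdot|1)=(\beta,\bar\beta)$) with $\alpha,\beta\in[0,\frac12)$ and $\bar\alpha\bar p>\beta p$. Then $g^\infty(0)>0$ if and only if $\alpha\bar\alpha\bar p^2<\beta\bar\beta p^2$ and $p\in(\frac12,1)$.
   Context: For $a\in[0,1]$, $\bar a=1-a$; $\Pr(X=1)=p$. For discrete random variables, $\mathsf{P}_{\mathsf{c}}(X)=\max_xP_X(x)$, $\mathsf{P}_{\mathsf{c}}(X|Z)=\sum_z\max_xP_{XZ}(x,z)$, and $I_\infty(X;Z)=\log\frac{\mathsf{P}_{\mathsf{c}}(X|Z)}{\mathsf{P}_{\mathsf{c}}(X)}$ (Arimoto's mutual information of order $\infty$). For $\varepsilon\ge0$, $g^\infty(\varepsilon)=\sup\{I_\infty(Y;Z): P_{Z|Y},\ X - Y - Z,\ I_\infty(X;Z)\le\varepsilon\}$, the supremum over channels $P_{Z|Y}$ into finite alphabets with $X - Y - Z$ a Markov chain. (Equivalently, $g^\infty(0)>0$ means that some such $Z$ with $\mathsf{P}_{\mathsf{c}}(X|Z)=\mathsf{P}_{\mathsf{c}}(X)$ has $\mathsf{P}_{\mathsf{c}}(Y|Z)>\mathsf{P}_{\mathsf{c}}(Y)$.) *)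

From HB Require Import structures.
From mathcomp Require Import all_boot all_order all_algebra.
From mathcomp Require Import all_classical all_reals ereal exp.
Set Implicit Arguments. Unset Strict Implicit. Unset Printing Implicit Defensive.
Import Order.TTheory GRing.Theory Num.Theory.
Local Open Scope ring_scope.
Local Open Scope classical_set_scope.

Section Defs.
Variable R : realType.

Definition stochastic (A B : finType) (V : A -> B -> R) : Prop :=
  (forall a b, 0 <= V a b) /\ (forall a, \sum_(b : B) V a b = 1).

Definition Pc (A : finType) (P : A -> R) : R := \big[Num.max/0]_(a : A) P a.

Definition Pc_cond (A B : finType) (P : A -> B -> R) : R :=
  \sum_(b : B) \big[Num.max/0]_(a : A) P a b.

(* Arimoto mutual information of order infinity, natural log *)
Definition Iinf (A B : finType) (P : A -> B -> R) (PA : A -> R) : R :=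
  ln (Pc_cond P / Pc PA).

Definition bern (p : R) (x : bool) : R := if x then p else 1 - p.

Definition BIBO (alpha beta : R) (x y : bool) : R :=
  if x then (if y then 1 - beta else beta)
  else (if y then alpha else 1 - alpha).

Definition PXZ (PX : bool -> R) (W : bool -> bool -> R) (Z : finType)
  (V : bool -> Z -> R) (x : bool) (z : Z) : R :=
  \sum_(y : bool) PX x * W x y * V y z.
Definition PY (PX : bool -> R) (W : bool -> bool -> R) (y : bool) : R :=
  \sum_(x : bool) PX x * W x y.
Definition PYZ (PX : bool -> R) (W : bool -> bool -> R) (Z : finType)
  (V : bool -> Z -> R) (y : bool) (z : Z) : R :=
  PY PX W y * V y z.

Definition ginf (PX : bool -> R) (W : bool -> bool -> R) (eps : R) : \bar R :=
  ereal_sup [set r%:E | r in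
    [set r : R | exists (Z : finType) (V : bool -> Z -> R),
       stochastic V /\ Iinf (PXZ PX W V) PX <= eps /\
       r = Iinf (PYZ PX W V) (PY PX W)]].

End Defs.

From HB Require Import structures.
From mathcomp Require Import all_boot all_order all_algebra.
From mathcomp Require Import all_classical all_reals ereal exp.
From mathcomp Require Import ring lra.
Set Implicit Arguments. Unset Strict Implicit. Unset Printing Implicit Defensive.
Import Order.TTheory GRing.Theory Num.Theory.
Local Open Scope ring_scope.

(* Since p >= 1/2, the blind guess of X is 1, so I_inf(X;Z) = 0 exactly when
   guessing X = 1 stays optimal after every observation z, i.e.
   P_XZ(0,z) <= P_XZ(1,z); for the BIBO channel this is the linear constraint
   D P(z|Y=0) <= E P(z|Y=1).  A gain I_inf(Y;Z) > 0 forces the best guess of Y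
   to depend on z.  At an observation where Y = 0 is guessed the constraint
   yields D P_Y(1) < E P_Y(0), which expands to the stated inequality; and if
   D >= E the constraint makes both rows of P_Z|Y equal, so Z would be useless
   for Y; D < E expands to p > 1/2.  Conversely, with t = D/E the channel
   sending Y = 0 to z = 1 and Y = 1 to z = 1 with probability t meets the
   constraint, while z = 0 certifies Y = 1 and yields a gain as soon as
   P_Y(1) t < P_Y(0). *)

Section Generic.
Variable R : realType.

Lemma ln_le0E (x : R) : (ln x <= 0) = (x <= 1).
Proof.
apply/idP/idP => [|/ln_le0 //]; apply: contraTT; rewrite -!ltNge; exact: ln_gt0.
Qed.

Lemma ln_gt0E (x : R) : (0 < ln x) = (1 < x).
Proof. by rewrite !ltNge ln_le0E. Qed.

Lemma Iinf_le0E (A B : finType) (P : A -> B -> R) (PA : A -> R) :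
  0 < Pc PA -> (Iinf P PA <= 0) = (Pc_cond P <= Pc PA).
Proof. by move=> PA_gt0; rewrite /Iinf ln_le0E ler_pdivrMr ?mul1r. Qed.

Lemma Iinf_gt0E (A B : finType) (P : A -> B -> R) (PA : A -> R) :
  0 < Pc PA -> (0 < Iinf P PA) = (Pc PA < Pc_cond P).
Proof. by move=> PA_gt0; rewrite /Iinf ln_gt0E ltr_pdivlMr ?mul1r. Qed.

Lemma bigmax0_bool (F : bool -> R) :
  \big[Num.max/0]_(b : bool) F b = Num.max (F true) (Num.max (F false) 0).
Proof. by rewrite /index_enum !unlock. Qed.

Lemma Pc_bool (PA : bool -> R) :
  0 <= PA false -> Pc PA = Num.max (PA true) (PA false).
Proof. by move=> PA0; rewrite /Pc bigmax0_bool (max_idPl PA0). Qed.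

Lemma Pc_cond_bool (B : finType) (P : bool -> B -> R) :
  (forall b, 0 <= P false b) ->
  Pc_cond P = \sum_b Num.max (P true b) (P false b).
Proof. by move=> P0; apply: eq_bigr => b _; rewrite bigmax0_bool (max_idPl (P0 b)). Qed.

Lemma Pc_bern (p : R) : 1 / 2 <= p <= 1 -> Pc (bern p) = p.
Proof. by move=> /andP[? ?]; rewrite Pc_bool /bern; [apply/max_idPl|]; lra. Qed.

Section FiniteSums.
Variable Z : finType.
Implicit Types f g : Z -> R.

Lemma eqfun_of_ler_sum_eq f g :
  (forall z, f z <= g z) -> \sum_z f z = \sum_z g z -> f =1 g.
Proof.
move=> fg sum_fg z; apply/eqP; rewrite eq_sym -subr_eq0; apply/eqP.
apply: (psumr_eq0P (P := predT) (F := fun i => g i - f i)) => // [i _|].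
  by rewrite subr_ge0.
by rewrite sumrB sum_fg subrr.
Qed.

Lemma sum_max_le_sumlP f g :
  \sum_z Num.max (f z) (g z) <= \sum_z f z <-> forall z, g z <= f z.
Proof.
split=> [le_sum z|gf]; last by under eq_bigr do rewrite (max_idPl (gf _)).
have f_le_max y : f y <= Num.max (f y) (g y) by rewrite le_max lexx.
have -> : f z = Num.max (f z) (g z).
  apply: (eqfun_of_ler_sum_eq f_le_max); apply/eqP; rewrite eq_le le_sum andbT.
  exact: ler_sum.
by rewrite le_max lexx orbT.
Qed.

Lemma sum_lt_sum_max f g :
  \sum_z f z < \sum_z Num.max (f z) (g z) -> exists z, f z < g z.
Proof.
move=> lt_sum; case: (boolP [exists z, f z < g z]) => [/existsP //|/existsPn gf].
suff /sum_max_le_sumlP : forall z, g z <= f z by rewrite leNgt lt_sum.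
by move=> z; rewrite leNgt gf.
Qed.

End FiniteSums.

Lemma sum_PXZ (PX : bool -> R) (W : bool -> bool -> R) (Z : finType)
    (V : bool -> Z -> R) x :
  (forall x, \sum_y W x y = 1) -> (forall y, \sum_z V y z = 1) ->
  \sum_z PXZ PX W V x z = PX x.
Proof.
move=> W1 V1; rewrite /PXZ exchange_big /=.
under eq_bigr do rewrite -mulr_sumr V1 mulr1.
by rewrite -mulr_sumr W1 mulr1.
Qed.

Lemma PXZ_ge0 (PX : bool -> R) (W : bool -> bool -> R) (Z : finType)
    (V : bool -> Z -> R) x z :
  0 <= PX x -> stochastic W -> stochastic V -> 0 <= PXZ PX W V x z.
Proof.
move=> PX0 [W0 _] [V0 _]; apply: sumr_ge0 => y _.
by rewrite !mulr_ge0.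
Qed.

Lemma stochastic_BIBO (alpha beta : R) :
  0 <= alpha <= 1 -> 0 <= beta <= 1 -> stochastic (BIBO alpha beta).
Proof. by move=> ? ?; split=> [[] []|[]]; rewrite ?big_bool /BIBO /=; lra. Qed.

Definition zchannel (t : R) (y z : bool) : R :=
  if y then (if z then t else 1 - t) else (if z then 1 else 0).

Lemma stochastic_zchannel (t : R) : 0 <= t <= 1 -> stochastic (zchannel t).
Proof. by move=> ?; split=> [[] []|[]]; rewrite ?big_bool /zchannel /=; lra. Qed.

Lemma ginf_gtP (PX : bool -> R) (W : bool -> bool -> R) (eps r : R) :
  (r%:E < ginf PX W eps)%E <->
  exists (Z : finType) (V : bool -> Z -> R),
    [/\ stochastic V, Iinf (PXZ PX W V) PX <= eps
      & r < Iinf (PYZ PX W V) (PY PX W)].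
Proof.
split=> [/ereal_sup_gtP [_ [_ [Z [V [sV [leak ->]]]] <-]]|[Z [V [sV leak gain]]]].
  by rewrite lte_fin => gain; exists Z, V.
apply/ereal_sup_gtP; exists (Iinf (PYZ PX W V) (PY PX W))%:E; last by rewrite lte_fin.
by exists (Iinf (PYZ PX W V) (PY PX W)) => //; exists Z, V.
Qed.

End Generic.

Section DominatedGain.
Variables (R : realType) (Z : finType) (a b : Z -> R) (D E q0 q1 : R).
Hypotheses (D_gt0 : 0 < D) (q0_ge0 : 0 <= q0).
Hypotheses (a_ge0 : forall z, 0 <= a z) (b_ge0 : forall z, 0 <= b z).
Hypotheses (sum_a : \sum_z a z = 1) (sum_b : \sum_z b z = 1).
Hypothesis dominated : forall z, D * a z <= E * b z.
Hypothesis gain : Num.max q1 q0 < \sum_z Num.max (q1 * b z) (q0 * a z).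

Lemma dominated_gain_bounds : D < E /\ D * q1 < E * q0.
Proof.
have [z1 lt1] : exists z, q1 * b z < q0 * a z.
  by apply: sum_lt_sum_max; rewrite -mulr_sumr sum_b mulr1 (le_lt_trans _ gain) ?le_max ?lexx.
have [z2 lt2] : exists z, q0 * a z < q1 * b z.
  apply: sum_lt_sum_max; rewrite -mulr_sumr sum_a mulr1.
  by under eq_bigr do rewrite maxC; rewrite (le_lt_trans _ gain) ?le_max ?lexx ?orbT.
split.
  rewrite ltNge; apply/negP => le_ED.
  have ab : a =1 b.
    apply: eqfun_of_ler_sum_eq => [z|]; last by rewrite sum_a sum_b.
    rewrite -(ler_pM2l D_gt0); apply: le_trans (dominated z) _.
    by rewrite ler_wpM2r.
  have : q1 < q0.
    by rewrite ltNge; apply: contraTN lt1 => le_q; rewrite ab -leNgt ler_wpM2r.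
  have : q0 < q1.
    by rewrite ltNge; apply: contraTN lt2 => le_q; rewrite ab -leNgt ler_wpM2r.
  lra.
have b1_gt0 : 0 < b z1.
  rewrite lt_neqAle b_ge0 andbT; apply/negP => /eqP b0.
  have a0 : a z1 = 0.
    apply/eqP; rewrite eq_le a_ge0 andbT -(pmulr_rle0 _ D_gt0).
    by rewrite (le_trans (dominated z1)) // -b0 mulr0.
  by move: lt1; rewrite -b0 a0 !mulr0 ltxx.
rewrite -(ltr_pM2r b1_gt0) -mulrA (lt_le_trans (_ : _ < D * (q0 * a z1))) //.
  by rewrite ltr_pM2l.
by rewrite mulrCA [E * q0]mulrC -mulrA ler_wpM2l.
Qed.

End DominatedGain.

Section BIBO.
Variables (R : realType) (p alpha beta : R).

Local Notation PX := (bern p).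
Local Notation W := (BIBO alpha beta).
(* [D = P_XY(0,0) - P_XY(1,0)], [E = P_XY(1,1) - P_XY(0,1)], [qy = P_Y(y)]. *)
Local Notation D := ((1 - p) * (1 - alpha) - p * beta).
Local Notation E := (p * (1 - beta) - (1 - p) * alpha).
Local Notation q0 := ((1 - p) * (1 - alpha) + p * beta).
Local Notation q1 := ((1 - p) * alpha + p * (1 - beta)).

Lemma PY_BIBO y : PY PX W y = if y then q1 else q0.
Proof. by rewrite /PY big_bool /bern /BIBO; case: y => /=; ring. Qed.

Lemma PXZ_BIBO_sub (Z : finType) (V : bool -> Z -> R) z :
  PXZ PX W V true z - PXZ PX W V false z = E * V true z - D * V false z.
Proof. by rewrite /PXZ !big_bool /bern /BIBO /=; ring. Qed.

Lemma BIBO_no_leakageP (Z : finType) (V : bool -> Z -> R) :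
    1 / 2 <= p -> p <= 1 -> 0 <= alpha <= 1 -> 0 <= beta <= 1 -> stochastic V ->
  Iinf (PXZ PX W V) PX <= 0 <-> forall z, D * V false z <= E * V true z.
Proof.
move=> p_ge p_le1 alpha01 beta01 sV; have sW := stochastic_BIBO alpha01 beta01.
have PX_ge0 x : 0 <= PX x by rewrite /bern; case: x => /=; lra.
have Pc_PX : Pc PX = p by apply: Pc_bern; apply/andP.
rewrite Iinf_le0E Pc_PX; last lra.
rewrite Pc_cond_bool => [|z]; last exact: PXZ_ge0.
have sum_PX1 : \sum_z PXZ PX W V true z = p by rewrite sum_PXZ //; [case: sW|case: sV].
rewrite -[leRHS]sum_PX1 sum_max_le_sumlP.
have PXZ_leE z : (PXZ PX W V false z <= PXZ PX W V true z) =
    (D * V false z <= E * V true z) by rewrite -subr_ge0 PXZ_BIBO_sub subr_ge0.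
by split=> le z; [rewrite -PXZ_leE|rewrite PXZ_leE]; exact: le.
Qed.

Lemma BIBO_gainE (Z : finType) (V : bool -> Z -> R) :
    0 <= p -> 0 <= beta -> beta * p < (1 - alpha) * (1 - p) -> stochastic V ->
  (0 < Iinf (PYZ PX W V) (PY PX W)) =
  (Num.max q1 q0 < \sum_z Num.max (q1 * V true z) (q0 * V false z)).
Proof.
move=> p_ge0 beta_ge0 D_gt0 [V_ge0 _].
have q0_gt0 : 0 < q0 by nra.
have Pc_PY : Pc (PY PX W) = Num.max q1 q0 by rewrite Pc_bool !PY_BIBO // ltW.
rewrite Iinf_gt0E Pc_PY; last by rewrite lt_max q0_gt0 orbT.
by rewrite Pc_cond_bool /PYZ !PY_BIBO // => z; rewrite mulr_ge0 // ltW.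
Qed.

Lemma BIBO_gain_bounds (Z : finType) (V : bool -> Z -> R) :
    1 / 2 <= p -> p <= 1 -> 0 <= alpha <= 1 -> 0 <= beta <= 1 ->
    beta * p < (1 - alpha) * (1 - p) -> stochastic V ->
    Iinf (PXZ PX W V) PX <= 0 -> 0 < Iinf (PYZ PX W V) (PY PX W) ->
  alpha * (1 - alpha) * (1 - p) ^+ 2 < beta * (1 - beta) * p ^+ 2 /\ 1 / 2 < p.
Proof.
move=> p_ge p_le1 alpha01 beta01 D_gt0 sV.
move=> /(BIBO_no_leakageP p_ge p_le1 alpha01 beta01 sV) dominated.
have /andP[alpha_ge0 _] := alpha01; have /andP[beta_ge0 _] := beta01.
rewrite BIBO_gainE //; last lra; move=> gain; have [V_ge0 V_sum1] := sV.
have D_pos : 0 < D by lra.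
have q0_ge0 : 0 <= q0 by nra.
have [E_gt_D DE_lt] := dominated_gain_bounds D_pos q0_ge0 (V_ge0 false) (V_ge0 true)
  (V_sum1 false) (V_sum1 true) dominated gain.
split; lra.
Qed.

Lemma BIBO_gain_witness :
    1 / 2 <= p -> p <= 1 -> 0 <= alpha <= 1 -> 0 <= beta <= 1 ->
    beta * p < (1 - alpha) * (1 - p) ->
    alpha * (1 - alpha) * (1 - p) ^+ 2 < beta * (1 - beta) * p ^+ 2 -> 1 / 2 < p ->
  exists V : bool -> bool -> R,
    [/\ stochastic V, Iinf (PXZ PX W V) PX <= 0 & 0 < Iinf (PYZ PX W V) (PY PX W)].
Proof.
move=> p_ge p_le1 alpha01 beta01 D_gt0 gap p_gt.
have /andP[alpha_ge0 _] := alpha01; have /andP[beta_ge0 _] := beta01.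
have E_gt0 : 0 < E by lra.
have q1_gt0 : 0 < q1 by nra.
pose t := D / E; have Et : E * t = D by rewrite mulrC divfK ?gt_eqF.
clearbody t.
have t_ge0 : 0 <= t by nra.
have t_lt1 : t < 1 by nra.
have q1t_lt : q1 * t < q0 by rewrite -(ltr_pM2l E_gt0) mulrCA Et; nra.
have sV : stochastic (zchannel t) by apply: stochastic_zchannel; rewrite t_ge0 ltW.
exists (zchannel t); split => //.
  by apply/(BIBO_no_leakageP p_ge p_le1 alpha01 beta01 sV) => -[] /=; nra.
have q1t_ge0 : 0 <= q1 * (1 - t) by rewrite mulr_ge0 ?subr_ge0 ?ltW.
rewrite BIBO_gainE //; [|lra..].
rewrite big_bool /= !mulr1 !mulr0 (max_idPr (ltW q1t_lt)) (max_idPl q1t_ge0).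
by rewrite gt_max; apply/andP; split; nra.
Qed.

End BIBO.

Theorem corollary2 (R : realType) (p alpha beta : R) :
  1 / 2 <= p -> p < 1 ->
  0 <= alpha -> alpha < 1 / 2 ->
  0 <= beta -> beta < 1 / 2 ->
  beta * p < (1 - alpha) * (1 - p) ->
  ((0 < ginf (bern p) (BIBO alpha beta) 0)%E <->
   (alpha * (1 - alpha) * (1 - p) ^+ 2 < beta * (1 - beta) * p ^+ 2
    /\ 1 / 2 < p)).
Proof.
move=> p_ge p_lt1 alpha_ge0 alpha_lt beta_ge0 beta_lt D_gt0.
have p_le1 : p <= 1 by lra.
have alpha01 : 0 <= alpha <= 1 by apply/andP; split; lra.
have beta01 : 0 <= beta <= 1 by apply/andP; split; lra.
rewrite ginf_gtP; split=> [[Z [V [sV leak gain]]]|[gap p_gt]].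
  exact: BIBO_gain_bounds p_ge p_le1 alpha01 beta01 D_gt0 sV leak gain.
have [V leak_gain] := BIBO_gain_witness p_ge p_le1 alpha01 beta01 D_gt0 gap p_gt.
by exists bool, V.
Qed.
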